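(* Let $\mathcal{X}$ be a finite set, let $\eta \in [0,1/2]$, $\gamma>0$, and let $p^{(0)}$ be the uniform distribution on $\mathcal{X}$. Let $h^{(1)},\dots,h^{(T)}:\mathcal{X}\to[0,1]$ be functions and define distributions recursively by $p^{(t)}(x) \propto p^{(t-1)}(x)\,(1-\eta h^{(t)}(x))$ (normalized to sum to $1$ over $\mathcal{X}$). Assume that for every $t\in\{1,\dots,T\}$, \[\sum_{x\in\mathcal{X}} h^{(t)}(x)\,p^{(t-1)}(x) \ge \gamma .\] Let $M_T(x) = \sum_{t=1}^T h^{(t)}(x)$. Then for all $x\in\mathcal{X}$, \[\log p^{(T)}(x) \ge \frac{\gamma\eta}{\eta+2}\,T - \eta(\eta+1)\,M_T(x) - \log(2|\mathcal{X}|).\]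
   Context: $M_T(x)$ counts (fractionally) how many times the classifiers $h^{(t)}$ downweight the point $x$. *)

From Stdlib Require Import Reals List.
Open Scope R_scope.

Definition lsum {A : Type} (xs : list A) (f : A -> R) : R :=
  fold_right (fun a acc => f a + acc) 0 xs.

(* The finite set X is represented by a type A together with a duplicate-free
   list xs enumerating all of its elements; |X| = length xs.
   h t is the t-th classifier h^(t) (used for t = 1..T).
   pdist xs eta h t = p^(t): p^(0) uniform, and
   p^(t)(x) = p^(t-1)(x) (1 - eta h^(t)(x)) / Z_t,
   Z_t = sum_y p^(t-1)(y) (1 - eta h^(t)(y)). *)
Fixpoint pdist {A : Type} (xs : list A) (eta : R) (h : nat -> A -> R) (t : nat)
  : A -> R :=
  match t with
  | O => fun _ => / INR (length xs)
  | S t' =>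
      fun x =>
        pdist xs eta h t' x * (1 - eta * h (S t') x)
        / lsum xs (fun y => pdist xs eta h t' y * (1 - eta * h (S t') y))
  end.

Definition M {A : Type} (h : nat -> A -> R) (T : nat) (x : A) : R :=
  lsum (seq 1 T) (fun t => h t x).

(* Each round changes ln p^(t)(x) by ln (1 - eta h^(t)(x)) - ln Z_t, where Z_t is the
   normalizer.  The first term is at least -eta (eta + 1) h^(t)(x) because
   ln (1 - u) >= -u - u^2 on [0, 1/2] and h^2 <= h; the second is at least eta gamma
   because Z_t = 1 - eta sum_x h^(t)(x) p^(t-1)(x) <= 1 - eta gamma and ln z <= z - 1.
   Summing over the rounds gives
   ln p^(T)(x) >= T eta gamma - eta (eta + 1) M_T(x) - ln |X|,
   which is stronger than the claimed bound. *)

From Stdlib Require Import Reals List Lra Lia.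
From Coquelicot Require Import Coquelicot.
Open Scope R_scope.

Lemma ln_one_minus_ge u : 0 <= u <= 1 / 2 -> - u - u * u <= ln (1 - u).
Proof.
  intros [Hu0 Hu1].
  destruct (Req_dec u 0) as [->|Hu]; [rewrite Rminus_0_r, ln_1; lra|].
  set (f v := ln (1 - v) + v + v * v).
  assert (Hf' : forall c, 0 <= c <= u ->
    derivable_pt_lim f c (c * (1 - 2 * c) / (1 - c))).
  { intros c Hc. apply is_derive_Reals. unfold f. auto_derive; [lra|]. field. lra. }
  destruct (MVT_cor2 _ _ 0 u ltac:(lra) Hf') as [c [Hfu Hc]].
  assert (Hslope : 0 <= c * (1 - 2 * c) / (1 - c)).
  { apply Rmult_le_pos; [apply Rmult_le_pos; lra|].
    apply Rlt_le, Rinv_0_lt_compat. lra. }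
  unfold f in Hfu. rewrite Rminus_0_r, ln_1 in Hfu. nra.
Qed.

Lemma ln_le_sub_1 z : 0 < z -> ln z <= z - 1.
Proof.
  intros Hz. rewrite <- (ln_exp (z - 1)).
  apply ln_le; [exact Hz|]. pose proof (exp_ineq1_le (z - 1)). lra.
Qed.

Section ListSum.
Context {A : Type}.

Lemma lsum_ext (xs : list A) f g :
  (forall a, f a = g a) -> lsum xs f = lsum xs g.
Proof. intros Hfg. induction xs; simpl; [lra|]. rewrite IHxs, Hfg. lra. Qed.

Lemma lsum_le (xs : list A) f g :
  (forall a, f a <= g a) -> lsum xs f <= lsum xs g.
Proof. intros Hfg. induction xs; simpl; [lra|]. specialize (Hfg a). lra. Qed.

Lemma lsum_add (xs : list A) f g :
  lsum xs (fun a => f a + g a) = lsum xs f + lsum xs g.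
Proof. induction xs; simpl; [lra|]. rewrite IHxs. lra. Qed.

Lemma lsum_scal_l (xs : list A) c f :
  lsum xs (fun a => c * f a) = c * lsum xs f.
Proof. induction xs; simpl; [lra|]. rewrite IHxs. lra. Qed.

Lemma lsum_const (xs : list A) c :
  lsum xs (fun _ => c) = INR (length xs) * c.
Proof. induction xs; simpl lsum; simpl length; [simpl; lra|]. rewrite S_INR, IHxs. lra. Qed.

Lemma lsum_app (xs ys : list A) f : lsum (xs ++ ys) f = lsum xs f + lsum ys f.
Proof. induction xs; simpl; [lra|]. rewrite IHxs. lra. Qed.

End ListSum.

Lemma M_succ {A : Type} (h : nat -> A -> R) t x : M h (S t) x = M h t x + h (S t) x.
Proof.
  unfold M. rewrite seq_S, lsum_app. simpl.
  replace (1 + t)%nat with (S t) by lia. lra.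
Qed.

Section Reweighting.
Variables (A : Type) (xs : list A) (eta : R) (h : nat -> A -> R).
Hypothesis Heta : 0 <= eta <= 1 / 2.

Let p := pdist xs eta h.

Definition normalizer (t : nat) : R :=
  lsum xs (fun y => p t y * (1 - eta * h (S t) y)).

Lemma pdist_succ t y : p (S t) y = p t y * (1 - eta * h (S t) y) / normalizer t.
Proof. reflexivity. Qed.

Lemma lsum_pdist_succ t : normalizer t <> 0 -> lsum xs (p (S t)) = 1.
Proof.
  intros HZ.
  rewrite (lsum_ext _ _ (fun y => / normalizer t * (p t y * (1 - eta * h (S t) y)))).
  - rewrite lsum_scal_l. fold (normalizer t). field. exact HZ.
  - intros y. rewrite pdist_succ. unfold Rdiv. ring.
Qed.

Lemma normalizer_eq t : lsum xs (p t) = 1 ->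
  normalizer t = 1 - eta * lsum xs (fun y => h (S t) y * p t y).
Proof.
  intros Hsum. unfold normalizer.
  rewrite (lsum_ext _ _ (fun y => p t y + (- eta) * (h (S t) y * p t y))).
  - rewrite lsum_add, lsum_scal_l, Hsum. ring.
  - intros y. ring.
Qed.

Lemma normalizer_bounds t gamma :
  lsum xs (p t) = 1 -> (forall y, 0 <= p t y) -> (forall y, 0 <= h (S t) y <= 1) ->
  gamma <= lsum xs (fun y => h (S t) y * p t y) ->
  0 < normalizer t <= 1 - eta * gamma.
Proof.
  intros Hsum Hp Hh Hgamma. rewrite normalizer_eq by exact Hsum.
  assert (Hedge_le_1 : lsum xs (fun y => h (S t) y * p t y) <= 1).
  { rewrite <- Hsum. apply lsum_le. intros y.
    specialize (Hh y). specialize (Hp y). nra. }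
  split; nra.
Qed.

Lemma ln_pdist_succ t y :
  0 < p t y -> 0 < 1 - eta * h (S t) y -> 0 < normalizer t ->
  ln (p (S t) y) = ln (p t y) + ln (1 - eta * h (S t) y) - ln (normalizer t).
Proof.
  intros Hp Hw HZ. rewrite pdist_succ. unfold Rdiv.
  rewrite ln_mult, ln_mult, ln_Rinv; auto using Rinv_0_lt_compat, Rmult_lt_0_compat.
Qed.

Lemma ln_one_minus_weight_ge u : 0 <= u <= 1 ->
  - eta * (eta + 1) * u <= ln (1 - eta * u).
Proof.
  intros Hu. pose proof (ln_one_minus_ge (eta * u) ltac:(split; nra)).
  assert (0 <= (eta * eta) * (u * (1 - u))) by (apply Rmult_le_pos; nra).
  nra.
Qed.

Variables (T : nat) (gamma : R).
Hypothesis Hxs : (0 < length xs)%nat.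
Hypothesis Hh : forall t, (1 <= t <= T)%nat -> forall x, 0 <= h t x <= 1.
Hypothesis Hedge : forall t, (1 <= t <= T)%nat ->
  lsum xs (fun x => h t x * p (t - 1) x) >= gamma.

Lemma edge_succ t : (t < T)%nat -> gamma <= lsum xs (fun y => h (S t) y * p t y).
Proof.
  intros Ht. assert (Hedge_t := Hedge (S t) ltac:(lia)).
  replace (S t - 1)%nat with t in Hedge_t by lia. lra.
Qed.

Lemma pdist_distribution t : (t <= T)%nat ->
  lsum xs (p t) = 1 /\ forall y, 0 < p t y.
Proof.
  induction t as [|t IH]; intros Ht.
  - assert (Hn : 0 < INR (length xs)) by (apply lt_0_INR; exact Hxs).
    split.
    + unfold p; simpl pdist. rewrite lsum_const. field. lra.
    + intros y. apply Rinv_0_lt_compat, Hn.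
  - destruct (IH ltac:(lia)) as [Hsum Hpos].
    destruct (normalizer_bounds t gamma Hsum (fun y => Rlt_le _ _ (Hpos y))
                (Hh (S t) ltac:(lia)) (edge_succ t ltac:(lia))) as [HZ _].
    split.
    + apply lsum_pdist_succ. lra.
    + intros y. rewrite pdist_succ. destruct (Hh (S t) ltac:(lia) y).
      apply Rdiv_lt_0_compat; [apply Rmult_lt_0_compat; [apply Hpos|nra]|exact HZ].
Qed.

Lemma normalizer_le t : (t < T)%nat -> 0 < normalizer t <= 1 - eta * gamma.
Proof.
  intros Ht. destruct (pdist_distribution t ltac:(lia)) as [Hsum Hpos].
  apply normalizer_bounds; [exact Hsum | intros y; apply Rlt_le, Hpos
                           | exact (Hh (S t) ltac:(lia)) | exact (edge_succ t Ht)].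
Qed.

Lemma ln_pdist_ge t y : (t <= T)%nat ->
  - ln (INR (length xs)) + INR t * (eta * gamma) - eta * (eta + 1) * M h t y
    <= ln (p t y).
Proof.
  induction t as [|t IH]; intros Ht.
  - unfold p, M; simpl. rewrite ln_Rinv by (apply lt_0_INR; exact Hxs). lra.
  - destruct (pdist_distribution t ltac:(lia)) as [_ Hpos].
    destruct (normalizer_le t ltac:(lia)) as [HZ HZle].
    assert (Hhy := Hh (S t) ltac:(lia) y).
    rewrite ln_pdist_succ by (auto; nra).
    pose proof (ln_one_minus_weight_ge _ Hhy).
    pose proof (ln_le_sub_1 _ HZ).
    rewrite M_succ, S_INR. specialize (IH ltac:(lia)). lra.
Qed.

End Reweighting.

Theorem theorem1 (A : Type) (xs : list A)
  (Hnd : NoDup xs) (Hfull : forall a : A, In a xs)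
  (eta gamma : R) (Heta : 0 <= eta <= 1 / 2) (Hgamma : 0 < gamma)
  (T : nat) (h : nat -> A -> R)
  (Hh : forall t, (1 <= t <= T)%nat -> forall x, 0 <= h t x <= 1)
  (Hedge : forall t, (1 <= t <= T)%nat ->
     lsum xs (fun x => h t x * pdist xs eta h (t - 1) x) >= gamma) :
  forall x : A,
    ln (pdist xs eta h T x) >=
      gamma * eta / (eta + 2) * INR T - eta * (eta + 1) * M h T x
      - ln (2 * INR (length xs)).
Proof.
  intros x.
  assert (Hxs : (0 < length xs)%nat) by (destruct xs; [destruct (Hfull x)|simpl; lia]).
  assert (Hn : 0 < INR (length xs)) by (apply lt_0_INR; exact Hxs).
  pose proof (ln_pdist_ge A xs eta h Heta T gamma Hxs Hh Hedge T x (le_n T)) as Hln.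
  assert (Hrate : gamma * eta / (eta + 2) <= eta * gamma).
  { apply (Rmult_le_reg_r (eta + 2)); [lra|].
    unfold Rdiv. rewrite Rmult_assoc, Rinv_l by lra. nra. }
  pose proof (pos_INR T). pose proof ln_lt_2.
  rewrite ln_mult by lra.
  nra.
Qed.
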